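(* Let $\varphi=\frac{1+\sqrt5}{2}$, $F_n=\frac{\varphi^n-(-1/\varphi)^n}{\varphi+1/\varphi}$, $F_0!=1$, $F_n!=F_1\cdots F_n$. For commuting variables $x,y$ and $n\ge1$ define the Golden binomial $$(x+y)_F^n=\prod_{k=0}^{n-1}\big(x+(-1)^k\varphi^{\,n-1-2k}y\big)=(x+\varphi^{n-1}y)(x-\varphi^{n-3}y)\cdots(x+(-1)^{n-1}\varphi^{-n+1}y),$$ and $(x+y)_F^0=1$. Then for every $n\ge0$, $$(x+y)_F^n=\sum_{k=0}^n\frac{F_n!}{F_{n-k}!\,F_k!}(-1)^{\frac{k(k-1)}2}x^{n-k}y^k.$$ *)

From HB Require Import structures.
From mathcomp Require Import all_boot all_order all_algebra.
Set Implicit Arguments. Unset Strict Implicit. Unset Printing Implicit Defensive.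
Import Order.TTheory GRing.Theory Num.Theory.
Local Open Scope ring_scope.

Definition phi (R : rcfType) : R := (1 + Num.sqrt 5) / 2.

Definition fibB (R : rcfType) (n : nat) : R :=
  (phi R ^+ n - (- (phi R)^-1) ^+ n) / (phi R + (phi R)^-1).

Definition fibfact (R : rcfType) (n : nat) : R :=
  \prod_(1 <= i < n.+1) fibB R i.

Definition golden_binom (R : rcfType) (A : comAlgType R) (x y : A) (n : nat) : A :=
  \prod_(k < n) (x + ((-1) ^+ k * phi R ^ ((n%:Z - 1 - 2 * k%:Z)%R)) *: y).

From Pilot Require Import Defs.
From HB Require Import structures.
From mathcomp Require Import all_boot all_order all_algebra.
From mathcomp Require Import ring lra.
Import Order.TTheory GRing.Theory Num.Theory.
Local Open Scope ring_scope.

(* Induction on n: peeling off the last factor gives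
   (x+y)_F^(n+1) = (x + phi y)_F^n (x + psi^n y) with psi = -1/phi, and the
   coefficients then obey a Pascal rule coming from the addition formula
   F_(a+b) = phi^a F_b + psi^b F_a, which is Binet's formula rearranged.
   The signs (-1)^C(k,2) accumulate from psi^j phi^j = (-1)^j. *)

Section GoldenBinomial.
Variable R : rcfType.
Local Notation phi := (phi R).
Local Notation psi := (- phi^-1).
Local Notation fibB := (fibB R).
Local Notation fibfact := (fibfact R).

Lemma phi_gt1 : 1 < phi.
Proof.
have sqrt5_gt1 : 1 < Num.sqrt (5 : R).
  by rewrite -[X in X < _]sqrtr1 ltr_sqrt ?ltr0n // ltr1n.
rewrite /Defs.phi ltr_pdivlMr // mul1r; lra.
Qed.

Lemma phi_gt0 : 0 < phi.
Proof. exact: lt_trans ltr01 phi_gt1. Qed.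

Lemma phi_neq0 : phi != 0.
Proof. exact: lt0r_neq0 phi_gt0. Qed.

Lemma phi_mul_psi : phi * psi = -1.
Proof. by rewrite mulrN divff // phi_neq0. Qed.

Lemma psiX_mul_phiX j : psi ^+ j * phi ^+ j = (-1) ^+ j.
Proof. by rewrite -exprMn mulrC phi_mul_psi. Qed.

Lemma fibBD a b : fibB (a + b) = phi ^+ a * fibB b + psi ^+ b * fibB a.
Proof. rewrite /Defs.fibB !exprD; ring. Qed.

Lemma fibB_neq0 i : (0 < i)%N -> fibB i != 0.
Proof.
move=> i_gt0; have phi_inv_ge0 : 0 <= phi^-1 by rewrite invr_ge0 ltW ?phi_gt0.
rewrite /Defs.fibB mulf_neq0 // ?invr_eq0; last by rewrite lt0r_neq0 ?ltr_wpDr ?phi_gt0.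
rewrite subr_eq0.
apply/negP => /eqP/(congr1 (fun z => `|z|)).
rewrite !normrX normrN normfV !ger0_norm ?ltW ?phi_gt0 // => phiX_eq.
have : 1 < phi ^+ i by rewrite exprn_egt1 -?lt0n ?phi_gt1.
have : phi^-1 ^+ i < 1.
  by rewrite exprn_ilt1 -?lt0n // invf_lt1 ?phi_gt0 ?phi_gt1.
lra.
Qed.

Lemma fibfact0 : fibfact 0 = 1.
Proof. by rewrite /Defs.fibfact big_geq. Qed.

Lemma fibfactS n : fibfact n.+1 = fibfact n * fibB n.+1.
Proof. by rewrite /Defs.fibfact big_nat_recr. Qed.

Lemma fibfact_neq0 n : fibfact n != 0.
Proof.
elim: n => [|n IHn]; first by rewrite fibfact0 oner_neq0.
by rewrite fibfactS mulf_neq0 ?fibB_neq0.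
Qed.

Definition fibonomial n k := fibfact n / (fibfact (n - k) * fibfact k).

Lemma fibonomialn0 n : fibonomial n 0 = 1.
Proof. by rewrite /fibonomial subn0 fibfact0 mulr1 divff ?fibfact_neq0. Qed.

Lemma fibonomialnn n : fibonomial n n = 1.
Proof. by rewrite /fibonomial subnn fibfact0 mul1r divff ?fibfact_neq0. Qed.

Lemma fibonomialS j m :
  fibonomial (j + m.+1).+1 j.+1 =
  phi ^+ j.+1 * fibonomial (j + m.+1) j.+1 + psi ^+ m.+1 * fibonomial (j + m.+1) j.
Proof.
rewrite /fibonomial.
have -> : ((j + m.+1).+1 - j.+1 = m.+1)%N by rewrite subSS addnC addnK.
have -> : (j + m.+1 - j.+1 = m)%N by rewrite addnS subSS addnC addnK.
have -> : (j + m.+1 - j = m.+1)%N by rewrite addnC addnK.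
rewrite fibfactS (fibfactS m) (fibfactS j) -addSn fibBD.
have Fm1 : fibB m.+1 != 0 by exact: fibB_neq0.
have Fj1 : fibB j.+1 != 0 by exact: fibB_neq0.
by field; rewrite !fibfact_neq0 Fm1 Fj1.
Qed.

(* Truncated subtraction makes [fibonomial n k] nonzero for [k > n], hence the cutoff. *)
Definition golden_coef n k :=
  if (k <= n)%N then fibonomial n k * (-1) ^+ 'C(k, 2) else 0.

Lemma golden_coefn0 n : golden_coef n 0 = 1.
Proof. by rewrite /golden_coef fibonomialn0 bin0n mulr1. Qed.

Lemma golden_coef_gt n : golden_coef n n.+1 = 0.
Proof. by rewrite /golden_coef ltnn. Qed.

Lemma golden_coefS n j : (j <= n)%N ->
  golden_coef n.+1 j.+1 =
  phi ^+ j.+1 * golden_coef n j.+1 + psi ^+ n * phi ^+ j * golden_coef n j.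
Proof.
rewrite /golden_coef ltnS binS bin1 exprD => j_le_n; rewrite j_le_n.
case: ltngtP j_le_n => // [j_lt_n _ | <- _]; last first.
  by rewrite mulr0 add0r !fibonomialnn psiX_mul_phiX; ring.
have [m ->] : exists m, n = (j + m.+1)%N by exists (n - j.+1)%N; rewrite addnS -addSn subnKC.
rewrite fibonomialS exprD -(psiX_mul_phiX j); ring.
Qed.

Variable A : comAlgType R.

Lemma golden_binomS (x y : A) n :
  golden_binom x y n.+1 = golden_binom x (phi *: y) n * (x + psi ^+ n *: y).
Proof.
rewrite /golden_binom big_ord_recr /=; congr (_ * (x + _)).
  apply: eq_bigr => k _; rewrite scalerA -mulrA; congr (x + (_ * _) *: y).
  have -> : (n.+1%:Z - 1 - 2 * k%:Z = (n%:Z - 1 - 2 * k%:Z) + 1)%R.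
    by rewrite -addn1 PoszD; ring.
  by rewrite expfzDr ?phi_neq0 // expr1z.
have -> : (n.+1%:Z - 1 - 2 * n%:Z = - n%:Z)%R by rewrite -addn1 PoszD; ring.
by rewrite -exprnN -mulN1r exprMn expr1n mulr1 -exprVn -exprMn mulN1r.
Qed.

Lemma golden_binomE (x y : A) n :
  golden_binom x y n = \sum_(k < n.+1) golden_coef n k *: (x ^+ (n - k) * y ^+ k).
Proof.
elim: n y => [|n IHn] y.
  by rewrite /golden_binom big_ord0 big_ord1 golden_coefn0 scale1r mulr1.
rewrite golden_binomS IHn big_distrl /=.
transitivity (\sum_(k < n.+1) (golden_coef n k * phi ^+ k) *: (x ^+ (n - k).+1 * y ^+ k)
  + \sum_(k < n.+1) (psi ^+ n * phi ^+ k * golden_coef n k) *: (x ^+ (n - k) * y ^+ k.+1)).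
  rewrite -big_split; apply: eq_bigr => k _ /=.
  rewrite exprZn -scalerAr mulrDr -!scalerAl -!scalerAr !scalerA.
  by congr (_ + _); congr (_ *: _); rewrite ?exprS; ring.
rewrite [in RHS]big_ord_recl.
under [in RHS]eq_bigr => i _ do
  rewrite /= /bump /= add1n (@golden_coefS n i (ltn_ord i)) subSS scalerDl.
rewrite big_split /= addrA; congr (_ + _).
rewrite big_ord_recl big_ord_recr /= golden_coef_gt mulr0 scale0r addr0.
rewrite !golden_coefn0 expr0 mulr1 subn0; congr (_ + _).
by apply: eq_bigr => i _; rewrite /bump /= add1n subnSK //; congr (_ *: _); ring.
Qed.

End GoldenBinomial.

Theorem mainTheorem10 (R : rcfType) (A : comAlgType R) (x y : A) (n : nat) :
  golden_binom x y n =
  \sum_(k < n.+1)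
     ((fibfact R n / (fibfact R (n - k) * fibfact R k))
        * (-1) ^+ ('C(k, 2))) *: (x ^+ (n - k) * y ^+ k).
Proof.
rewrite golden_binomE; apply: eq_bigr => k _.
by rewrite /golden_coef -ltnS ltn_ord.
Qed.
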